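(* Let $d\ge 2$ and $1\le k\le d$. For $i=1,\dots,k-1$ let $\mathbf W_i\in\mathcal B_i$, and let $\mathbf W_k\in\mathcal B_k$. Put $w_1=(\mathbf W_1,\dots,\mathbf W_{k-1},\mathbf W_k,M_{k+1},\dots,M_d)$ and $w_2=(\mathbf W_1,\dots,\mathbf W_{k-1},M_k,M_{k+1},\dots,M_d)$. Then for all $x\in\mathcal X$, $$|h_{w_1}(x)-h_{w_2}(x)|_2\le \alpha_k\exp\Big(\sum_{i=1}^{k-1}\alpha_i\Big)\,M\,|x|_2 .$$
   Context: Let $m,\delta_1,\dots,\delta_d$ be positive integers, $\delta_0=m$, $R>0$, and $\mathcal X=\{x\in\mathbb R^m:|x|_2\le R\}$ ($|\cdot|_2$ the Euclidean norm). For $1\le j\le d$ fix a matrix $M_j\in\mathbb R^{\delta_j\times\delta_{j-1}}$ with $\|M_j\|_2>0$ ($\|\cdot\|_2$ the spectral norm) and a number $\alpha_j>0$, and let $\mathcal B_j=\{\mathbf W\in\mathbb R^{\delta_j\times\delta_{j-1}}:\|\mathbf W-M_j\|_2\le\alpha_j\|M_j\|_2\}$. Let $\phi$ be an activation (acting on vectors of every relevant dimension, e.g. the entrywise ReLU) that is $1$-Lipschitz with respect to the Euclidean norm and satisfies $\phi(0)=0$, and let $\phi_o$ be either the identity map or the soft-max function on $\mathbb R^{\delta_d}$. For $w=(\mathbf W_1,\dots,\mathbf W_d)$ define $h_w:\mathcal X\to\mathbb R^{\delta_d}$ by $h_w(x)=\phi_o(\mathbf W_d\,\phi(\mathbf W_{d-1}\cdots\phi(\mathbf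 W_1x)\cdots))$. Let $M=\prod_{j=1}^d\|M_j\|_2$. *)

From HB Require Import structures.
From mathcomp Require Import all_boot all_order all_algebra.
From mathcomp Require Import all_classical all_reals all_analysis.
Set Implicit Arguments. Unset Strict Implicit. Unset Printing Implicit Defensive.
Import Order.TTheory GRing.Theory Num.Theory.
Local Open Scope classical_set_scope.
Local Open Scope ring_scope.

Section Defs.
Variable R : realType.

Definition e2norm (n : nat) (v : 'cV[R]_n) : R :=
  Num.sqrt (\sum_(i < n) v i 0 ^+ 2).

Definition specnorm (p q : nat) (A : 'M[R]_(p, q)) : R :=
  sup [set e2norm (A *m v) | v in [set v : 'cV[R]_q | e2norm v <= 1]].

Definition softmax (n : nat) (v : 'cV[R]_n) : 'cV[R]_n :=
  \col_i (expR (v i 0) / \sum_(j < n) expR (v j 0)).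

(* activation applied after layer j (identity on the input, j = 0) *)
Definition act (phi : forall n, 'cV[R]_n -> 'cV[R]_n) (j n : nat)
  (v : 'cV[R]_n) : 'cV[R]_n := if j == 0%N then v else phi n v.

(* pre-activations: pre 0 = x, pre (j+1) = W_{j+1} phi(pre j)  (no phi at j=0)
   W j is the weight matrix of layer j (j = 1..d), in R^{delta j x delta (j-1)};
   W 0 is unused. *)
Fixpoint pre (delta : nat -> nat) (phi : forall n, 'cV[R]_n -> 'cV[R]_n)
  (W : forall j : nat, 'M[R]_(delta j, delta j.-1)) (x : 'cV[R]_(delta 0%N))
  (j : nat) : 'cV[R]_(delta j) :=
  match j with
  | 0 => x
  | k.+1 => W k.+1 *m act phi k (pre phi W x k)
  end.

Definition net (delta : nat -> nat) (d : nat)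
  (phi : forall n, 'cV[R]_n -> 'cV[R]_n)
  (phio : 'cV[R]_(delta d) -> 'cV[R]_(delta d))
  (W : forall j : nat, 'M[R]_(delta j, delta j.-1)) (x : 'cV[R]_(delta 0%N))
  : 'cV[R]_(delta d) := phio (pre phi W x d).

End Defs.

From HB Require Import structures.
From mathcomp Require Import all_boot all_order all_algebra.
From mathcomp Require Import all_classical all_reals all_analysis.
From mathcomp Require Import ring lra.
Import Order.TTheory GRing.Theory Num.Theory.
Set Implicit Arguments. Unset Strict Implicit.
Local Open Scope ring_scope.

(* The two networks share the weights below layer k, so their (k-1)-th
   activations coincide; that activation has norm at most
   prod_(i<k) |W_i| |x| <= exp(sum_(i<k) alpha_i) prod_(i<k) |M_i| |x|, since
   |W_i| <= (1 + alpha_i) |M_i| <= exp(alpha_i) |M_i|.  Layer k multiplies it by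
   W_k - M_k, of spectral norm at most alpha_k |M_k|.  Above layer k both
   networks apply the same matrices M_i, and phi as well as the output map
   (identity or soft-max) are 1-Lipschitz, so each further layer enlarges the
   difference by a factor of at most |M_i|. *)

Section EuclideanNorm.
Variables (R : realType) (n : nat).
Implicit Types u v : 'cV[R]_n.
Local Notation N := (@e2norm R n).

Lemma e2norm_ge0 v : 0 <= N v.
Proof. exact: sqrtr_ge0. Qed.

Lemma e2norm_sqr v : N v ^+ 2 = \sum_i v i 0 ^+ 2.
Proof. by rewrite sqr_sqrtr // sumr_ge0 // => i _; rewrite sqr_ge0. Qed.

Lemma e2norm_le_sum_sqr u v :
  \sum_i u i 0 ^+ 2 <= \sum_i v i 0 ^+ 2 -> N u <= N v.
Proof. by move=> uv; rewrite ler_sqrt // sumr_ge0 // => i _; rewrite sqr_ge0. Qed.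

Lemma e2norm0 : N 0 = 0.
Proof. by rewrite /e2norm big1 ?sqrtr0 // => i _; rewrite mxE expr0n. Qed.

Lemma e2normZ a v : N (a *: v) = `|a| * N v.
Proof.
rewrite /e2norm -sqrtr_sqr -sqrtrM ?sqr_ge0 // mulr_sumr.
by congr Num.sqrt; apply: eq_bigr => i _; rewrite mxE exprMn.
Qed.

Lemma normr_entry_le_e2norm v i : `|v i 0| <= N v.
Proof.
rewrite -sqrtr_sqr ler_sqrt ?sumr_ge0 // => [|j _]; last exact: sqr_ge0.
by rewrite (bigD1 i) //= lerDl sumr_ge0 // => j _; rewrite sqr_ge0.
Qed.

Lemma e2norm_eq0 v : N v = 0 -> v = 0.
Proof.
move=> v0; apply/matrixP => i j; rewrite ord1 mxE; apply/normr0_eq0.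
by apply/le_anti; rewrite normr_ge0 -v0 normr_entry_le_e2norm.
Qed.

Lemma e2norm_le_sum_norm v : N v <= \sum_i `|v i 0|.
Proof.
rewrite -[leRHS]ger0_norm ?sumr_ge0 // -sqrtr_sqr ler_sqrt ?sqr_ge0 //.
rewrite expr2 mulr_suml ler_sum // => i _.
rewrite -[leLHS]ger0_norm ?sqr_ge0 // normrX expr2.
by rewrite ler_wpM2l // (bigD1 i) //= lerDl sumr_ge0.
Qed.

(* Lagrange's identity: the defect in Cauchy-Schwarz is a sum of squares. *)
Lemma sum_mul_le_e2norm u v : \sum_i u i 0 * v i 0 <= N u * N v.
Proof.
set uv := \sum_i _.
have lagrange : \sum_i \sum_j (u i 0 * v j 0 - u j 0 * v i 0) ^+ 2 =
    2 * (N u ^+ 2 * N v ^+ 2 - uv ^+ 2).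
  rewrite !e2norm_sqr; set Su := \sum_i u i 0 ^+ 2; set Sv := \sum_i v i 0 ^+ 2.
  have -> : 2 * (Su * Sv - uv ^+ 2) = Su * Sv + Sv * Su - 2 * (uv * uv) by ring.
  rewrite !big_distrlr mulr_sumr -big_split -sumrB; apply: eq_bigr => i _ /=.
  rewrite mulr_sumr -big_split -sumrB; apply: eq_bigr => j _ /=; ring.
have : uv ^+ 2 <= (N u * N v) ^+ 2.
  rewrite -subr_ge0 -(pmulr_rge0 _ (ltr0Sn R 1)) exprMn -lagrange.
  by do 2 apply: sumr_ge0 => ? _; rewrite sqr_ge0.
have := mulr_ge0 (e2norm_ge0 u) (e2norm_ge0 v); nra.
Qed.

Lemma e2normD u v : N (u + v) <= N u + N v.
Proof.
rewrite -[leRHS]ger0_norm ?addr_ge0 ?e2norm_ge0 // -sqrtr_sqr ler_sqrt ?sqr_ge0 //.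
have -> : \sum_i (u + v) i 0 ^+ 2 =
    \sum_i u i 0 ^+ 2 + \sum_i v i 0 ^+ 2 + 2 * \sum_i u i 0 * v i 0.
  by rewrite mulr_sumr -!big_split; apply: eq_bigr => i _ /=; rewrite !mxE; ring.
rewrite -!e2norm_sqr; have := sum_mul_le_e2norm u v; lra.
Qed.

End EuclideanNorm.

Section SpectralNorm.
Variables (R : realType) (p q : nat).
Implicit Types A B : 'M[R]_(p, q).
Local Notation N := (@e2norm R _).

Lemma specnorm_has_ubound A :
  has_ubound [set N (A *m v) | v in [set v : 'cV[R]_q | N v <= 1]].
Proof.
exists (\sum_i \sum_j `|A i j|) => _ [v /= v1 <-].
apply: le_trans (e2norm_le_sum_norm _) _; apply: ler_sum => i _.
rewrite mxE; apply: le_trans (ler_norm_sum _ _ _) _; apply: ler_sum => j _.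
by rewrite normrM ler_piMr // (le_trans (normr_entry_le_e2norm _ _)).
Qed.

Lemma specnorm_ge0 A : 0 <= specnorm A.
Proof.
apply: le_trans (ub_le_sup (specnorm_has_ubound A) _).
  exact: (e2norm_ge0 (A *m 0)).
by exists 0; rewrite //= e2norm0.
Qed.

Lemma e2norm_mulmx_le A v : N (A *m v) <= specnorm A * N v.
Proof.
have [v0|v_neq0] := eqVneq (N v) 0.
  by rewrite (e2norm_eq0 v0) mulmx0 !e2norm0 mulr0.
have v_gt0 : 0 < N v by rewrite lt_def v_neq0 e2norm_ge0.
have normZ (w : 'cV[R]_(_)) : N ((N v)^-1 *: w) = N w / N v.
  by rewrite e2normZ ger0_norm ?invr_ge0 ?e2norm_ge0 // mulrC.
rewrite -ler_pdivrMr // -normZ scalemxAr.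
apply: (ub_le_sup (specnorm_has_ubound A)).
by exists ((N v)^-1 *: v); rewrite //= normZ divff.
Qed.

Lemma specnormD A B : specnorm (A + B) <= specnorm A + specnorm B.
Proof.
apply: ge_sup; first by exists (N ((A + B) *m 0)), 0; rewrite //= e2norm0.
move=> _ [v /= v1 <-]; rewrite mulmxDl; apply: le_trans (e2normD _ _) _.
apply: le_trans (lerD (e2norm_mulmx_le A v) (e2norm_mulmx_le B v)) _.
by rewrite -mulrDl ler_piMr // addr_ge0 ?specnorm_ge0.
Qed.

Lemma specnorm_le_expR A B a :
  specnorm (A - B) <= a * specnorm B -> specnorm A <= expR a * specnorm B.
Proof.
move=> AB; rewrite -[A](subrK B); apply: le_trans (specnormD _ _) _.
apply: le_trans (lerD AB (lexx _)) _.
by rewrite -[X in _ + X]mul1r -mulrDl addrC ler_wpM2r ?specnorm_ge0 ?expR_ge1Dx.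
Qed.

End SpectralNorm.

Section Softmax.
Variable R : realType.
Local Notation N := (@e2norm R _).

Lemma softmax_ge0 n (v : 'cV[R]_n) i : 0 <= softmax v i 0.
Proof. by rewrite mxE divr_ge0 ?expR_ge0 ?sumr_ge0 // => j _; rewrite expR_ge0. Qed.

Lemma softmax_sum n (v : 'cV[R]_n.+1) : \sum_i softmax v i 0 = 1.
Proof.
under eq_bigr do rewrite mxE.
rewrite -mulr_suml divff // lt0r_neq0 // (bigD1 ord0) //= ltr_pwDl ?expR_gt0 //.
by rewrite sumr_ge0 // => j _; rewrite expR_ge0.
Qed.

Lemma sqr_wmean_le n (w x : 'I_n -> R) :
  (forall i, 0 <= w i) -> \sum_i w i = 1 ->
  (\sum_i w i * x i) ^+ 2 <= \sum_i w i * x i ^+ 2.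
Proof.
move=> w_ge0 w1; set m := \sum_i w i * x i.
have : 0 <= \sum_i w i * (x i - m) ^+ 2.
  by rewrite sumr_ge0 // => i _; rewrite mulr_ge0 ?sqr_ge0.
have -> : \sum_i w i * (x i - m) ^+ 2 =
    \sum_i w i * x i ^+ 2 - 2 * m * m + m ^+ 2 * \sum_i w i.
  rewrite (eq_bigr (fun i => w i * x i ^+ 2 - 2 * m * (w i * x i) + m ^+ 2 * w i)).
    by rewrite big_split sumrB -!mulr_sumr.
  by move=> i _; ring.
rewrite w1; lra.
Qed.

Lemma wcov_le n (w c h : 'I_n -> R) :
  (forall i, 0 <= w i) -> \sum_i w i = 1 ->
  \sum_i c i * (w i * h i) - (\sum_i c i * w i) * (\sum_i w i * h i)
    <= (\sum_i h i ^+ 2 + \sum_i c i ^+ 2) / 2.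
Proof.
move=> w_ge0 w1.
have := sqr_wmean_le (fun i => h i - c i) w_ge0 w1.
have w_le1 i : w i <= 1.
  by rewrite -w1 (bigD1 i) //= lerDl sumr_ge0.
have wsqr_le (y : 'I_n -> R) : \sum_i w i * y i ^+ 2 <= \sum_i y i ^+ 2.
  by apply: ler_sum => i _; rewrite ler_piMl ?sqr_ge0.
have -> : \sum_i w i * (h i - c i) = \sum_i w i * h i - \sum_i c i * w i.
  by rewrite -sumrB; apply: eq_bigr => i _; ring.
have -> : \sum_i w i * (h i - c i) ^+ 2 =
    \sum_i w i * h i ^+ 2 + \sum_i w i * c i ^+ 2 - 2 * \sum_i c i * (w i * h i).
  by rewrite mulr_sumr -big_split -sumrB; apply: eq_bigr => i _ /=; ring.
have := wsqr_le h; have := wsqr_le c.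
set H := \sum_i w i * h i; set C := \sum_i c i * w i.
have := sqr_ge0 H; have := sqr_ge0 C; nra.
Qed.

Lemma is_derive_softmax_line n (v h : 'cV[R]_n.+1) (c : 'I_n.+1 -> R) t :
  let w := softmax (v + t *: h) in
  is_derive t 1 (fun s => \sum_i c i * softmax (v + s *: h) i 0)
    (\sum_i c i * (w i 0 * h i 0) - (\sum_i c i * w i 0) * (\sum_i w i 0 * h i 0)).
Proof.
move=> w; pose e i s := expR (v i 0 + s * h i 0); pose S s := \sum_j e j s.
have S_neq0 s : S s != 0.
  rewrite lt0r_neq0 // /S (bigD1 ord0) //= ltr_pwDl ?expR_gt0 // sumr_ge0 // => j _.
  exact: expR_ge0.
have softmaxE s i : softmax (v + s *: h) i 0 = e i s / S s.
  by rewrite !mxE; congr (_ / _); apply: eq_bigr => j _; rewrite !mxE.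
have De i : is_derive t 1 (e i) (e i t * h i 0).
  by apply: is_derive_eq; rewrite scaler0 !add0r mul1r; congr (_ * _); exact: mulr1.
have DS : is_derive t 1 S (\sum_j e j t * h j 0).
  by rewrite (_ : S = \sum_j e j); [exact: is_derive_sum | rewrite fct_sumE].
have DG :
    is_derive t 1 (\sum_i (fun s => c i * e i s)) (\sum_i c i * (e i t * h i 0)).
  by apply: is_derive_sum => i; apply: is_derive_eq.
have -> : (fun s => \sum_i c i * softmax (v + s *: h) i 0) =
    (\sum_i (fun s => c i * e i s)) * (fun s => (S s)^-1).
  apply/funext => s; rewrite fct_sumE mulrfctE mulr_suml.
  by under eq_bigr do rewrite softmaxE mulrA.
apply: is_derive_eq (is_deriveM DG (is_deriveV (S_neq0 t) DS)) _.
have wE i : w i 0 = e i t * (S t)^-1 := softmaxE t i.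
have -> : \sum_i c i * (w i 0 * h i 0) = (\sum_i c i * (e i t * h i 0)) * (S t)^-1.
  by rewrite mulr_suml; apply: eq_bigr => i _; rewrite wE; ring.
have -> : \sum_i c i * w i 0 = (\sum_i c i * e i t) * (S t)^-1.
  by rewrite mulr_suml; apply: eq_bigr => i _; rewrite wE; ring.
have -> : \sum_i w i 0 * h i 0 = (\sum_j e j t * h j 0) * (S t)^-1.
  by rewrite mulr_suml; apply: eq_bigr => i _; rewrite wE; ring.
rewrite fct_sumE -![_ *: _]/(_ * _) -exprVn; ring.
Qed.

(* Mean value theorem along [v + t (u - v)]: for [c = softmax u - softmax v],
   [|c|^2] is the derivative of [t |-> <c, softmax (v + t (u - v))>] at some
   point, a covariance under the soft-max weights, bounded by [wcov_le]. *)
Lemma softmax_lipschitz n (u v : 'cV[R]_n) : N (softmax u - softmax v) <= N (u - v).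
Proof.
case: n u v => [|n] u v; first by rewrite /e2norm !big_ord0.
pose h := u - v; pose c i := (softmax u - softmax v) i 0.
have Df s := is_derive_softmax_line v h c s.
have f_cont :
    {within `[0, 1], continuous (fun s => \sum_i c i * softmax (v + s *: h) i 0)}%classic.
  by apply: derivable_within_continuous => s _; case: (Df s).
have [s _] := MVT ltr01 (fun s _ => Df s) f_cont.
rewrite /= scale1r scale0r addr0 /h subrKC subr0 mulr1 -/h.
have -> : \sum_i c i * softmax u i 0 - \sum_i c i * softmax v i 0 = \sum_i c i ^+ 2.
  by rewrite -sumrB; apply: eq_bigr => i _ /=; rewrite -mulrBr expr2 /c !mxE.
move=> /esym cov_eq.
have := wcov_le c (fun i => h i 0) (softmax_ge0 _) (softmax_sum (v + s *: h)).
rewrite -cov_eq => cov_le.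
by apply: e2norm_le_sum_sqr; rewrite -/c; lra.
Qed.

End Softmax.

Section Network.
Variables (R : realType) (delta : nat -> nat).
Variable phi : forall n, 'cV[R]_n -> 'cV[R]_n.
Local Notation N := (@e2norm R _).
Hypothesis phi_lipschitz :
  forall n (u v : 'cV[R]_n), N (phi u - phi v) <= N (u - v).
Hypothesis phi0 : forall n, phi (0 : 'cV[R]_n) = 0.
Implicit Types W M : forall j, 'M[R]_(delta j, delta j.-1).

Lemma act_lipschitz j n (u v : 'cV[R]_n) : N (act phi j u - act phi j v) <= N (u - v).
Proof. by rewrite /act; case: eqP. Qed.

Lemma act_norm_le j n (u : 'cV[R]_n) : N (act phi j u) <= N u.
Proof.
have act0 : act phi j (0 : 'cV_n) = 0 by rewrite /act phi0 if_same.
by have := act_lipschitz j u 0; rewrite act0 !subr0.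
Qed.

Lemma pre_eq W1 W2 x j : (forall i, (0 < i <= j)%N -> W1 i = W2 i) ->
  pre phi W1 x j = pre phi W2 x j.
Proof.
elim: j => [//|j IH] eqW /=; rewrite eqW ?leqnn // IH // => i /andP[i_gt0 ij].
by rewrite eqW // i_gt0 ltnW.
Qed.

Lemma pre_norm_le W x j :
  N (pre phi W x j) <= (\prod_(1 <= i < j.+1) specnorm (W i)) * N x.
Proof.
elim: j => [|j IH] /=; first by rewrite big_geq // mul1r.
apply: le_trans (e2norm_mulmx_le _ _) _.
rewrite big_nat_recr //= [leRHS]mulrAC [leRHS]mulrC ler_wpM2l ?specnorm_ge0 //.
exact: le_trans (act_norm_le _ _) IH.
Qed.

Lemma pre_norm_le_expR W M alpha x j :
    (forall i, (0 < i <= j)%N -> specnorm (W i - M i) <= alpha i * specnorm (M i)) ->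
  N (pre phi W x j)
    <= expR (\sum_(1 <= i < j.+1) alpha i) * (\prod_(1 <= i < j.+1) specnorm (M i)) * N x.
Proof.
move=> hW; apply: le_trans (pre_norm_le W x j) _.
rewrite ler_wpM2r ?e2norm_ge0 // expR_sum -big_split /=.
rewrite big_nat_cond [leRHS]big_nat_cond; apply: ler_prod => i.
by rewrite andbT => /hW /specnorm_le_expR ->; rewrite specnorm_ge0.
Qed.

Lemma pre_sub_layer_le W1 W2 x j : (forall i, (0 < i <= j)%N -> W1 i = W2 i) ->
  N (pre phi W1 x j.+1 - pre phi W2 x j.+1)
    <= specnorm (W1 j.+1 - W2 j.+1) * N (pre phi W2 x j).
Proof.
move=> eqW; rewrite /= (pre_eq x eqW) -mulmxBl.
apply: le_trans (e2norm_mulmx_le _ _) _.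
by rewrite ler_wpM2l ?specnorm_ge0 ?act_norm_le.
Qed.

Lemma pre_sub_propagate_le W1 W2 M x j l : (j <= l)%N ->
    (forall i, (j < i <= l)%N -> W1 i = M i /\ W2 i = M i) ->
  N (pre phi W1 x l - pre phi W2 x l)
    <= (\prod_(j.+1 <= i < l.+1) specnorm (M i)) * N (pre phi W1 x j - pre phi W2 x j).
Proof.
move=> /subnKC <-; elim: (l - j)%N => [|t IH] eqW.
  by rewrite addn0 big_geq // mul1r.
rewrite addnS big_nat_recr /=; last by rewrite ltnS leq_addr.
have /eqW[-> ->] : (j < (j + t).+1 <= j + t.+1)%N by rewrite ltnS leq_addr addnS /=.
rewrite -mulmxBr; apply: le_trans (e2norm_mulmx_le _ _) _.
rewrite [leRHS]mulrAC [leRHS]mulrC ler_wpM2l ?specnorm_ge0 //.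
apply: le_trans (act_lipschitz _ _ _) (IH _) => i /andP[ji it].
by apply: eqW; rewrite ji addnS (leqW it).
Qed.

End Network.

Theorem lemma1 (R : realType) (d : nat) (delta : nat -> nat) (Rad : R)
  (Mats : forall j : nat, 'M[R]_(delta j, delta j.-1))
  (alpha : nat -> R)
  (phi : forall n, 'cV[R]_n -> 'cV[R]_n)
  (phio : 'cV[R]_(delta d) -> 'cV[R]_(delta d))
  (k : nat) (W : forall j : nat, 'M[R]_(delta j, delta j.-1))
  (hd : (2 <= d)%N)
  (hdelta : forall j, (j <= d)%N -> (0 < delta j)%N)
  (hRad : 0 < Rad)
  (hM : forall j, (1 <= j <= d)%N -> 0 < specnorm (Mats j))
  (halpha : forall j, (1 <= j <= d)%N -> 0 < alpha j)
  (hphi_lip : forall n (u v : 'cV[R]_n),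
      e2norm (phi n u - phi n v) <= e2norm (u - v))
  (hphi0 : forall n, phi n 0 = 0)
  (hphio : phio = id \/ phio = @softmax R (delta d))
  (hk : (1 <= k <= d)%N)
  (hW : forall i, (1 <= i <= k)%N ->
      specnorm (W i - Mats i) <= alpha i * specnorm (Mats i)) :
  forall x : 'cV[R]_(delta 0%N), e2norm x <= Rad ->
  e2norm (net phi phio (fun j => if (j <= k)%N then W j else Mats j) x
          - net phi phio (fun j => if (j < k)%N then W j else Mats j) x)
  <= alpha k * expR (\sum_(1 <= i < k) alpha i)
       * (\prod_(1 <= j < d.+1) specnorm (Mats j)) * e2norm x.
Proof.
move=> x _; case: k hk hW => [//|k] /andP[_ kd] hW.
set A := fun j => if (j <= k.+1)%N then W j else Mats j.
set B := fun j => if (j < k.+1)%N then W j else Mats j.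
have hWk : specnorm (W k.+1 - Mats k.+1) <= alpha k.+1 * specnorm (Mats k.+1).
  by apply: hW; rewrite /= leqnn.
have output : e2norm (net phi phio A x - net phi phio B x)
    <= e2norm (pre phi A x d - pre phi B x d).
  by rewrite /net; case: hphio => ->; [exact: lexx | exact: softmax_lipschitz].
have above : e2norm (pre phi A x d - pre phi B x d) <=
    (\prod_(k.+2 <= i < d.+1) specnorm (Mats i))
      * e2norm (pre phi A x k.+1 - pre phi B x k.+1).
  apply: (pre_sub_propagate_le hphi_lip x kd) => i /andP[ki _].
  by rewrite /A /B leqNgt ki ltnNge (ltnW ki).
have at_k : e2norm (pre phi A x k.+1 - pre phi B x k.+1)
    <= alpha k.+1 * specnorm (Mats k.+1) * e2norm (pre phi B x k).
  apply: le_trans (pre_sub_layer_le hphi_lip hphi0 x _) _.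
    by move=> i /andP[_ ik]; rewrite /A /B ltnS ik (leqW ik).
  by rewrite /A /B leqnn ltnn /= ler_wpM2r ?e2norm_ge0.
have below : e2norm (pre phi B x k) <= expR (\sum_(1 <= i < k.+1) alpha i)
    * (\prod_(1 <= i < k.+1) specnorm (Mats i)) * e2norm x.
  apply: (pre_norm_le_expR hphi_lip hphi0 x) => i /andP[i_gt0 ik].
  by rewrite /B ltnS ik hW // i_gt0 (leqW ik).
have above_ge0 : 0 <= \prod_(k.+2 <= i < d.+1) specnorm (Mats i).
  by apply: prodr_ge0 => i _; exact: specnorm_ge0.
have at_k_ge0 := le_trans (specnorm_ge0 _) hWk.
rewrite [\prod_(1 <= j < d.+1) _](big_cat_nat (n := k.+1)) ?(leqW kd) //=.
rewrite [\prod_(k.+1 <= j < d.+1) _]big_ltn //.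
apply: le_trans output _; apply: le_trans above _.
set T := \prod_(k.+2 <= i < d.+1) _; set E := expR _; set P := \prod_(1 <= i < k.+1) _.
have -> : alpha k.+1 * E * (P * (specnorm (Mats k.+1) * T)) * e2norm x =
    T * (alpha k.+1 * specnorm (Mats k.+1) * (E * P * e2norm x)) by ring.
by rewrite ler_wpM2l //; apply: le_trans at_k _; rewrite ler_wpM2l.
Qed.
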